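(* Let $f$ be as in the standing setting and quasi-strongly convex on $X$ with constant $\kappa_f>0$; let $\mu_f=\kappa_f/L_f$. Consider the fast gradient method: $x^0=y^0\in X$ and for $k\ge0$ $$x^{k+1}=\big[y^k-\tfrac1{L_f}\nabla f(y^k)\big]_X,\qquad y^{k+1}=x^{k+1}+\beta\,(x^{k+1}-x^k),\qquad \beta=\frac{\sqrt{L_f}-\sqrt{\kappa_f}}{\sqrt{L_f}+\sqrt{\kappa_f}}.$$ Assume that all iterates $y^k$ lie in $X$ and have the same projection onto $X^*$, i.e. $[y^k]_{X^*}=[y^0]_{X^*}$ for all $k\ge0$. Then $$f(x^k)-f^*\le\big(1-\sqrt{\mu_f}\big)^k\cdot 2\big(f(x^0)-f^*\big)\qquad\forall k\ge0.$$
   Context: Standing setting: $X\subseteq\mathbb{R}^n$ is a nonempty closed convex set; $f:X\to\mathbb{R}$ is convex and continuously differentiable, with $L_f$-Lipschitz continuous gradient on $X$ ($L_f>0$). Consider $f^*=\min_{x\in X}f(x)$ with optimal set $X^*$ nonempty and closed and $f^*$ finite. $\|\cdot\|$ is the Euclidean norm, $[u]_S$ is the Euclidean projection onto a closed convex set $S$, and $\bar x=[x]_{X^*}$. Quasi-strong convexity with constant $\kappa_f$: $f^*\ge f(x)+\langle\nabla f(x),\bar x-x\rangle+\frac{\kappa_f}{2}\|x-\bar x\|^2$ for all $x\in X$ (this forces $\kappa_f\le L_f$). *)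

From mathcomp Require Import all_boot.
From Stdlib Require Import Reals.
Set Implicit Arguments. Unset Strict Implicit. Unset Printing Implicit Defensive.
Local Open Scope R_scope.

Definition vec (n : nat) := 'I_n -> R.

Definition vadd n (u v : vec n) : vec n := fun i => u i + v i.
Definition vsub n (u v : vec n) : vec n := fun i => u i - v i.
Definition vscale n (a : R) (u : vec n) : vec n := fun i => a * u i.

Definition dot n (u v : vec n) : R := \big[Rplus/0]_(i < n) (u i * v i).
Definition vnorm n (u : vec n) : R := sqrt (dot u u).

Definition convex_setn n (S : vec n -> Prop) : Prop :=
  forall x y t, S x -> S y -> 0 <= t <= 1 ->
    S (vadd (vscale t x) (vscale (1 - t) y)).

Definition closed_setn n (S : vec n -> Prop) : Prop :=
  forall x, (forall eps, 0 < eps -> exists y, S y /\ vnorm (vsub x y) < eps) -> S x.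

Definition convex_fun_on n (S : vec n -> Prop) (f : vec n -> R) : Prop :=
  forall x y t, S x -> S y -> 0 <= t <= 1 ->
    f (vadd (vscale t x) (vscale (1 - t) y)) <= t * f x + (1 - t) * f y.

Definition has_gradient_on n (S : vec n -> Prop) (f : vec n -> R) (g : vec n -> vec n) : Prop :=
  forall x, S x -> forall eps, 0 < eps -> exists delta, 0 < delta /\
    forall y, S y -> vnorm (vsub y x) < delta ->
      Rabs (f y - f x - dot (g x) (vsub y x)) <= eps * vnorm (vsub y x).

Definition continuous_onn n (S : vec n -> Prop) (g : vec n -> vec n) : Prop :=
  forall x, S x -> forall eps, 0 < eps -> exists delta, 0 < delta /\
    forall y, S y -> vnorm (vsub y x) < delta -> vnorm (vsub (g y) (g x)) < eps.

Definition lipschitz_on n (S : vec n -> Prop) (g : vec n -> vec n) (L : R) : Prop :=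
  forall x y, S x -> S y -> vnorm (vsub (g x) (g y)) <= L * vnorm (vsub x y).

Definition is_proj n (S : vec n -> Prop) (u p : vec n) : Prop :=
  S p /\ forall z, S z -> vnorm (vsub u p) <= vnorm (vsub u z).

Definition optset n (X : vec n -> Prop) (f : vec n -> R) (fstar : R) : vec n -> Prop :=
  fun x => X x /\ f x = fstar.

Definition quasi_strongly_convex n (X : vec n -> Prop) (f : vec n -> R)
    (g : vec n -> vec n) (fstar kappa : R) : Prop :=
  forall x xbar, X x -> is_proj (optset X f fstar) x xbar ->
    f x + dot (g x) (vsub xbar x) + kappa / 2 * (vnorm (vsub x xbar)) ^ 2 <= fstar.

(* With θ = √(κ/L_f) and v_k defined by y_k = (x_k + θ v_k)/(1 + θ), the
   Lyapunov function V_k = f(x_k) − f* + κ/2 ‖v_k − p‖², where p is the common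
   projection of the y_k onto X*, satisfies V_{k+1} ≤ (1 − θ) V_k: up to a
   nonpositive square, V_{k+1} − (1 − θ) V_k is a convex combination of the
   slacks of the projected-gradient inequality tested against x_k (closed with
   convexity) and against p (closed with quasi-strong convexity).
   Quasi-strong convexity also yields quadratic growth κ/2 ‖x − x̄‖² ≤ f(x) − f*,
   hence V_0 ≤ 2 f(x_0) − 2 f*. The argument needs κ ≤ L_f; if κ > L_f, the
   descent lemma and quasi-strong convexity force every y_k to equal p, and all
   x_k are then optimal. *)

From HB Require Import structures.
From mathcomp Require Import all_boot.
From Stdlib Require Import Reals Lra Psatz FunctionalExtensionality.
Set Implicit Arguments. Unset Strict Implicit. Unset Printing Implicit Defensive.
Local Open Scope R_scope.

Lemma RplusA : associative Rplus. Proof. by move=> a b c; rewrite Rplus_assoc. Qed.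
HB.instance Definition _ := Monoid.isComLaw.Build R 0 Rplus RplusA Rplus_comm Rplus_0_l.

Ltac vext := apply: functional_extensionality => ?; rewrite /vsub /vadd /vscale.

Section InnerProduct.
Variable n : nat.
Implicit Types u v w : vec n.

Lemma dot_addl u v w : dot (vadd u v) w = dot u w + dot v w.
Proof. by rewrite /dot -big_split; apply: eq_bigr => i _; rewrite Rmult_plus_distr_r. Qed.

Lemma dot_scalel c u w : dot (vscale c u) w = c * dot u w.
Proof.
rewrite /dot (big_morph (Rmult c) (Rmult_plus_distr_l c) (Rmult_0_r c)).
by apply: eq_bigr => i _; rewrite /vscale Rmult_assoc.
Qed.

Lemma dot_comm u v : dot u v = dot v u.
Proof. by apply: eq_bigr => i _; rewrite Rmult_comm. Qed.

Lemma dot_addr u v w : dot w (vadd u v) = dot w u + dot w v.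
Proof. by rewrite !(dot_comm w) dot_addl. Qed.

Lemma dot_scaler c u w : dot w (vscale c u) = c * dot w u.
Proof. by rewrite !(dot_comm w) dot_scalel. Qed.

Lemma vsubE u v : vsub u v = vadd u (vscale (-1) v).
Proof. by vext; ring. Qed.

Lemma dot_subl u v w : dot (vsub u v) w = dot u w - dot v w.
Proof. by rewrite vsubE dot_addl dot_scalel; ring. Qed.

Lemma dot_subr u v w : dot w (vsub u v) = dot w u - dot w v.
Proof. by rewrite !(dot_comm w) dot_subl. Qed.

Lemma dot_ge0 u : 0 <= dot u u.
Proof. by apply: big_ind => [|a b|i _]; [lra|lra|apply: Rle_0_sqr]. Qed.

Lemma dot_self_eq0 u : dot u u = 0 -> forall i, u i = 0.
Proof.
move=> u0 i; apply: Rsqr_0_uniq; apply: Rle_antisym; last exact: Rle_0_sqr.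
rewrite -u0 /dot (bigD1 i) //= -{1}[Rsqr (u i)]Rplus_0_r; apply: Rplus_le_compat_l.
by apply: big_ind => [|a b|j _]; [lra|lra|apply: Rle_0_sqr].
Qed.

Lemma dot_sq_le u v : dot u v * dot u v <= dot u u * dot v v.
Proof.
have := dot_ge0 (vsub (vscale (dot v v) u) (vscale (dot u v) v)).
have := dot_ge0 (vsub (vscale (dot u v) u) (vscale (dot u u) v)).
have := dot_ge0 (vsub u v); have := dot_ge0 (vadd u v).
have := dot_ge0 u; have := dot_ge0 v.
rewrite !(dot_subl, dot_subr, dot_addl, dot_addr, dot_scalel, dot_scaler) (dot_comm v u).
move: (dot u u) (dot v v) (dot u v) => a b c b0 a0 sum0 dif0 aE bE.
case: (Rle_lt_or_eq_dec 0 b b0) => [b_gt0|b_eq0].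
  by apply: (Rmult_le_reg_l b); nra.
case: (Rle_lt_or_eq_dec 0 a a0) => [a_gt0|a_eq0].
  by apply: (Rmult_le_reg_l a); nra.
rewrite -b_eq0 -a_eq0 in sum0 dif0 *; nra.
Qed.

Lemma vnorm_sq u : vnorm u ^ 2 = dot u u.
Proof. exact/pow2_sqrt/dot_ge0. Qed.

Lemma cauchy_schwarz u v : dot u v <= vnorm u * vnorm v.
Proof.
rewrite /vnorm -sqrt_mult_alt; last exact: dot_ge0.
case: (Rle_lt_dec (dot u v) 0) => [uv_le0|uv_gt0]; first exact: Rle_trans uv_le0 (sqrt_pos _).
rewrite -(sqrt_square (dot u v)); last lra.
exact/sqrt_le_1_alt/dot_sq_le.
Qed.

Lemma vnorm_scale c u : vnorm (vscale c u) = Rabs c * vnorm u.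
Proof.
rewrite /vnorm dot_scalel dot_scaler -Rmult_assoc sqrt_mult_alt; last exact: Rle_0_sqr.
by rewrite sqrt_Rsqr_abs.
Qed.

End InnerProduct.

Lemma dot_le_of_vnorm_le n (u v : vec n) : vnorm u <= vnorm v -> dot u u <= dot v v.
Proof. exact: sqrt_le_0 (dot_ge0 u) (dot_ge0 v). Qed.

Lemma vnorm_le_of_dot_le n (u v : vec n) : dot u u <= dot v v -> vnorm u <= vnorm v.
Proof. exact: sqrt_le_1_alt. Qed.

Lemma vsub_dot_eq0 n (u v : vec n) : dot (vsub u v) (vsub u v) = 0 -> u = v.
Proof.
move/dot_self_eq0 => uv0; apply: functional_extensionality => i.
by have := uv0 i; rewrite /vsub; lra.
Qed.

Lemma Rdiv_succ_mul_lt (e N : R) : 0 < e -> 0 <= N -> e / (N + 1) * N < e.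
Proof.
move=> e_gt0 N0; rewrite (_ : e / (N + 1) * N = e - e / (N + 1)); last by field; lra.
suff : 0 < e / (N + 1) by lra.
apply: Rdiv_lt_0_compat; lra.
Qed.

Lemma Rle0_of_le_mul_small (a N : R) :
  0 <= N -> (forall t, 0 < t <= 1 -> a <= t * N) -> a <= 0.
Proof.
move=> N0 small; apply: Rle_plus_epsilon => eps eps_gt0; rewrite Rplus_0_l.
have t_gt0 : 0 < eps / (N + 1) by apply: Rdiv_lt_0_compat; lra.
have t01 : 0 < Rmin 1 (eps / (N + 1)) <= 1 by split; [apply: Rmin_glb_lt; lra | apply: Rmin_l].
apply: Rle_trans (small _ t01) _.
apply: Rle_trans (Rmult_le_compat_r _ _ _ N0 (Rmin_r _ _)) _.
exact/Rlt_le/Rdiv_succ_mul_lt.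
Qed.

Lemma proj_variational n (S : vec n -> Prop) (u p z : vec n) :
  convex_setn S -> is_proj S u p -> S z -> dot (vsub u p) (vsub z p) <= 0.
Proof.
move=> convS [Sp p_min] Sz.
suff : 2 * dot (vsub u p) (vsub z p) <= 0 by lra.
apply: (Rle0_of_le_mul_small (dot_ge0 (vsub z p))) => t t01.
have := dot_le_of_vnorm_le (p_min _ (convS z p t Sz Sp ltac:(lra))).
have -> : vsub u (vadd (vscale t z) (vscale (1 - t) p)) = vsub (vsub u p) (vscale t (vsub z p)).
  by vext; ring.
move: (vsub u p) (vsub z p) => w e.
rewrite !(dot_subl, dot_subr, dot_scalel, dot_scaler) (dot_comm e) => le_sq.
apply: (Rmult_le_reg_l t); nra.
Qed.

Section SmoothConvex.
Variables (n : nat) (X : vec n -> Prop) (f : vec n -> R) (g : vec n -> vec n) (L : R).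
Hypotheses (convX : convex_setn X) (convf : convex_fun_on X f)
  (grad_f : has_gradient_on X f g).

Lemma convex_gradient_ineq a b : X a -> X b -> f a + dot (g a) (vsub b a) <= f b.
Proof.
move=> Xa Xb.
set M := vnorm (vsub b a); have M0 : 0 <= M := sqrt_pos _.
suff : dot (g a) (vsub b a) - (f b - f a) <= 0 by lra.
apply: Rle_plus_epsilon => eps eps_gt0; rewrite Rplus_0_l.
have eps'_gt0 : 0 < eps / (M + 1) by apply: Rdiv_lt_0_compat; lra.
have [d [d_gt0 taylor]] := grad_f Xa eps'_gt0.
have d'_gt0 : 0 < d / (M + 1) by apply: Rdiv_lt_0_compat; lra.
set t := Rmin 1 (d / (M + 1)).
have t01 : 0 < t <= 1 by split; [apply: Rmin_glb_lt; lra | apply: Rmin_l].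
have zE : vsub (vadd (vscale t b) (vscale (1 - t) a)) a = vscale t (vsub b a) by vext; ring.
have zM : vnorm (vscale t (vsub b a)) = t * M by rewrite vnorm_scale Rabs_pos_eq //; lra.
have tM_lt : t * M < d.
  apply: Rle_lt_trans (Rmult_le_compat_r _ _ _ M0 (Rmin_r _ _)) _.
  exact: Rdiv_succ_mul_lt.
have t01' : 0 <= t <= 1 by lra.
have := taylor _ (convX Xb Xa t01'); rewrite zE zM dot_scaler => /(_ tM_lt) near.
have := Rle_abs (- (f (vadd (vscale t b) (vscale (1 - t) a)) - f a - t * dot (g a) (vsub b a))).
rewrite Rabs_Ropp => near'.
have := convf Xb Xa t01'.
have eps'M := Rdiv_succ_mul_lt eps_gt0 M0.
move=> cvx; apply: (Rmult_le_reg_l t); nra.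
Qed.

Hypotheses (L_gt0 : 0 < L) (lip_g : lipschitz_on X g L).

Lemma lipschitz_cross_le a b w : X a -> X b ->
  dot (vsub (g b) (g a)) w <= L * vnorm (vsub b a) * vnorm w.
Proof.
move=> Xa Xb; apply: Rle_trans (cauchy_schwarz _ _) _.
exact: Rmult_le_compat_r (sqrt_pos _) (lip_g Xb Xa).
Qed.

Definition bregman a b := f b - f a - dot (g a) (vsub b a).

Lemma bregman_midpoint a b (c := vadd (vscale (/ 2) a) (vscale (1 - / 2) b)) :
  bregman a b = bregman a c + bregman c b + dot (vsub (g c) (g a)) (vsub b c).
Proof. by rewrite /bregman !(dot_subl, dot_subr); ring. Qed.

(* Bisecting [a, b] m times: the error term halves at each level. *)
Lemma bregman_le_pow_half m a b : X a -> X b ->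
  bregman a b <= (L / 2 + L / 2 * (/ 2) ^ m) * dot (vsub b a) (vsub b a).
Proof.
elim: m a b => [|m IH] a b Xa Xb.
  have := convex_gradient_ineq Xb Xa; have := lipschitz_cross_le (vsub b a) Xa Xb.
  rewrite /bregman -!vnorm_sq !(dot_subl, dot_subr) /=; nra.
have Xc := convX Xa Xb (ltac:(lra) : 0 <= / 2 <= 1).
have := bregman_midpoint a b; move: Xc.
set c := vadd (vscale (/ 2) a) (vscale (1 - / 2) b) => Xc ->.
have ca : vsub c a = vscale (/ 2) (vsub b a) by rewrite /c; vext; field.
have bc : vsub b c = vscale (/ 2) (vsub b a) by rewrite /c; vext; field.
have := IH a c Xa Xc; have := IH c b Xc Xb; have := lipschitz_cross_le (vsub b c) Xa Xc.
have := vnorm_sq (vsub b a).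
rewrite ca bc !vnorm_scale !dot_scalel !dot_scaler Rabs_pos_eq /=; last lra.
move=> N_sq; rewrite (_ : L * (/ 2 * vnorm (vsub b a)) * (/ 2 * vnorm (vsub b a)) =
  L / 4 * (vnorm (vsub b a) * (vnorm (vsub b a) * 1))); last by field.
rewrite N_sq; lra.
Qed.

Lemma descent_lemma a b : X a -> X b ->
  f b <= f a + dot (g a) (vsub b a) + L / 2 * dot (vsub b a) (vsub b a).
Proof.
move=> Xa Xb.
set C := L / 2 * dot (vsub b a) (vsub b a).
have C0 : 0 <= C by apply: Rmult_le_pos; [lra | exact: dot_ge0].
suff : bregman a b <= C by rewrite /bregman; lra.
apply: Rle_plus_epsilon => eps eps_gt0.
have eps'_gt0 : 0 < eps / (C + 1) by apply: Rdiv_lt_0_compat; lra.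
have [m small] := pow_lt_1_zero (/ 2) ltac:(rewrite Rabs_pos_eq; lra) _ eps'_gt0.
have P0 : 0 <= (/ 2) ^ m by apply: pow_le; lra.
have := small m (Nat.le_refl m); rewrite Rabs_pos_eq // => P_small.
have := Rmult_le_compat_l _ _ _ C0 (Rlt_le _ _ P_small).
have := bregman_le_pow_half m Xa Xb; have := Rdiv_succ_mul_lt eps_gt0 C0.
rewrite /C; lra.
Qed.

Lemma gradient_step_le y x1 z :
  X y -> is_proj X (vsub y (vscale (/ L) (g y))) x1 -> X z ->
  f x1 <= f y + dot (g y) (vsub z y) + L * dot (vsub y x1) (vsub y z)
          - L / 2 * dot (vsub y x1) (vsub y x1).
Proof.
move=> Xy Px1 Xz; have Xx1 : X x1 by case: Px1.
have := proj_variational convX Px1 Xz.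
have -> : vsub (vsub y (vscale (/ L) (g y))) x1 = vsub (vsub y x1) (vscale (/ L) (g y)).
  by vext; ring.
rewrite dot_subl dot_scalel => vi.
have {}vi : L * dot (vsub y x1) (vsub z x1) <= dot (g y) (vsub z x1).
  have := Rmult_le_compat_l L _ _ (Rlt_le _ _ L_gt0) vi.
  rewrite Rmult_0_r Rmult_minus_distr_l -Rmult_assoc Rinv_r; lra.
move: vi (descent_lemma Xy Xx1).
rewrite !(dot_subl, dot_subr) ?(dot_comm x1 y) ?(dot_comm z y) ?(dot_comm z x1); lra.
Qed.

End SmoothConvex.

Lemma is_proj_segment n (S : vec n -> Prop) (x xb : vec n) t :
  convex_setn S -> is_proj S x xb -> 0 <= t <= 1 ->
  is_proj S (vadd (vscale t x) (vscale (1 - t) xb)) xb.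
Proof.
move=> convS Pxb t01; split => [|z Sz]; first by case: Pxb.
apply: vnorm_le_of_dot_le.
have -> : vsub (vadd (vscale t x) (vscale (1 - t) xb)) xb = vscale t (vsub x xb) by vext; ring.
have -> : vsub (vadd (vscale t x) (vscale (1 - t) xb)) z =
          vadd (vscale t (vsub x xb)) (vscale (-1) (vsub z xb)) by vext; ring.
have := proj_variational convS Pxb Sz; have := dot_ge0 (vsub z xb).
move: (vsub x xb) (vsub z xb) => w e.
rewrite !(dot_addl, dot_addr, dot_scalel, dot_scaler) (dot_comm e w); nra.
Qed.

Lemma growth_step (kappa c t D phix phit gam : R) :
  0 < t <= 1 -> 0 <= D ->
  phit + (1 - t) * gam <= phix ->
  phit + kappa / 2 * (t * t * D) <= t * gam ->
  c * (t * t * D) <= phit ->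
  t * (c + (1 - t) * (kappa / 2)) * D <= phix.
Proof. move=> t01 D0 cvx qsc ih; apply: (Rmult_le_reg_l t); nra. Qed.

Lemma growth_const_le (k M : R) : 0 <= k -> 0 <= M ->
  k * ((M + 1) / (M + 1 + 4)) <=
  (M + 2) / (M + 4) * (k * (M / (M + 4)) + (1 - (M + 2) / (M + 4)) * k).
Proof.
move=> k0 M0.
have -> : (M + 2) / (M + 4) * (k * (M / (M + 4)) + (1 - (M + 2) / (M + 4)) * k) =
          k * ((M + 1) / (M + 1 + 4)) + k * (4 / ((M + 4) * (M + 4) * (M + 5))).
  by field; lra.
suff : 0 <= k * (4 / ((M + 4) * (M + 4) * (M + 5))) by lra.
apply: Rmult_le_pos => //; apply: Rlt_le; apply: Rdiv_lt_0_compat; first lra.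
by apply: Rmult_lt_0_compat; [apply: Rmult_lt_0_compat|]; lra.
Qed.

Section QuadraticGrowth.
Variables (n : nat) (X : vec n -> Prop) (f : vec n -> R) (g : vec n -> vec n) (fstar kappa : R).
Hypotheses (convX : convex_setn X) (convf : convex_fun_on X f)
  (grad_f : has_gradient_on X f g) (f_ge : forall z, X z -> fstar <= f z)
  (kappa_gt0 : 0 < kappa) (qsc : quasi_strongly_convex X f g fstar kappa).

Lemma optset_convex : convex_setn (optset X f fstar).
Proof.
move=> a b t [Xa fa] [Xb fb] t01; split; first exact: convX.
have := convf Xa Xb t01; have := f_ge (convX Xa Xb t01); rewrite fa fb; nra.
Qed.

(* Replacing x by x̄ + t (x − x̄) with t = (m + 2)/(m + 4) keeps the projection
   x̄ and upgrades the growth constant κ/2 · m/(m + 4) to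
   κ/2 · (m + 1)/(m + 5): a discrete form of integrating (φ(t)/t)' ≥ κ‖x − x̄‖²/2
   along the segment, where φ(t) = f(x̄ + t(x − x̄)) − f*. *)
Lemma quadratic_growth_approx m x xb : X x -> is_proj (optset X f fstar) x xb ->
  kappa / 2 * (INR m / (INR m + 4)) * dot (vsub x xb) (vsub x xb) <= f x - fstar.
Proof.
elim: m x xb => [|m IH] x xb Xx Pxb.
  by have := f_ge Xx; rewrite /= /Rdiv !(Rmult_0_l, Rmult_0_r); lra.
rewrite S_INR; set M := INR m; have M0 : 0 <= M := pos_INR m.
set t := (M + 2) / (M + 4).
have t01 : 0 < t <= 1.
  split; first by apply: Rdiv_lt_0_compat; lra.
  by apply: (Rmult_le_reg_r (M + 4)); rewrite ?Rmult_1_l /t /Rdiv ?Rmult_assoc ?Rinv_l; lra.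
have t01' : 0 <= t <= 1 by lra.
have [[Xxb _] _] := Pxb.
have Xt := convX Xx Xxb t01'.
have Pt := is_proj_segment optset_convex Pxb t01'.
move: Xt Pt; set xt := vadd (vscale t x) (vscale (1 - t) xb) => Xt Pt.
have E1 : vsub xt xb = vscale t (vsub x xb) by rewrite /xt; vext; ring.
have E2 : vsub xb xt = vscale (- t) (vsub x xb) by rewrite /xt; vext; ring.
have E3 : vsub x xt = vscale (1 - t) (vsub x xb) by rewrite /xt; vext; ring.
have := qsc Xt Pt; rewrite E2 E1 vnorm_sq dot_scaler !dot_scalel !dot_scaler => q.
have := convex_gradient_ineq convX convf grad_f Xt Xx; rewrite E3 dot_scaler => cvx.
have := IH xt xb Xt Pt; rewrite E1 !dot_scalel !dot_scaler => ih.
have D0 := dot_ge0 (vsub x xb).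
have const := growth_const_le (k := kappa / 2) ltac:(lra) M0.
apply: Rle_trans (Rmult_le_compat_r _ _ _ D0 const) _.
apply: (growth_step (phit := f xt - fstar) (gam := dot (g xt) (vsub x xb))) => //;
  rewrite -/t; rewrite -/M in ih; lra.
Qed.

Lemma quadratic_growth x xb : X x -> is_proj (optset X f fstar) x xb ->
  kappa / 2 * dot (vsub x xb) (vsub x xb) <= f x - fstar.
Proof.
move=> Xx Pxb; set D := dot (vsub x xb) (vsub x xb); have D0 : 0 <= D := dot_ge0 _.
apply: Rle_plus_epsilon => eps eps_gt0.
have [m m_big] := INR_unbounded (2 * kappa * D / eps); have M0 := pos_INR m.
have := quadratic_growth_approx m Xx Pxb; rewrite -/D.
have -> : kappa / 2 * (INR m / (INR m + 4)) * D = kappa / 2 * D - 2 * kappa * D / (INR m + 4).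
  by field; lra.
suff : 2 * kappa * D / (INR m + 4) < eps by lra.
apply: (Rmult_lt_reg_r (INR m + 4)); first lra.
rewrite (_ : 2 * kappa * D / (INR m + 4) * (INR m + 4) = 2 * kappa * D); last by field; lra.
have : 2 * kappa * D / eps * eps = 2 * kappa * D by field; lra.
nra.
Qed.

End QuadraticGrowth.

(* v_k is determined by y_k = (x_k + θ v_k)/(1 + θ). *)
Definition fgm_v n (th : R) (x y : vec n) : vec n := vscale (/ th) (vsub (vscale (1 + th) y) x).

(* The two bracketed terms are the slacks of the gradient-step inequality
   against z = x0 and z = p. *)
Lemma fgm_lyapunov_identity n (x0 x1 y p : vec n) (th L fx0 fx1 fs : R) :
  th <> 0 -> 1 + th <> 0 ->
  let kappa := th * th * L in
  let v0 := fgm_v th x0 y in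
  let v1 := fgm_v th x1 (vadd x1 (vscale ((1 - th) / (1 + th)) (vsub x1 x0))) in
  fx1 - fs + kappa / 2 * dot (vsub v1 p) (vsub v1 p)
    - (1 - th) * (fx0 - fs + kappa / 2 * dot (vsub v0 p) (vsub v0 p)) =
  (1 - th) * (fx1 - (fx0 + L * dot (vsub y x1) (vsub y x0) - L / 2 * dot (vsub y x1) (vsub y x1)))
  + th * (fx1 - (fs - kappa / 2 * dot (vsub y p) (vsub y p) + L * dot (vsub y x1) (vsub y p)
                 - L / 2 * dot (vsub y x1) (vsub y x1)))
  - kappa / 2 * th * (1 - th) * dot (vsub v0 y) (vsub v0 y).
Proof.
move=> th0 th1 kappa v0 v1; rewrite /v0 /v1 /kappa /fgm_v.
rewrite !(dot_subl, dot_subr, dot_addl, dot_addr, dot_scalel, dot_scaler).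
rewrite (dot_comm x0 x1) (dot_comm x0 y) (dot_comm x0 p) (dot_comm x1 y) (dot_comm x1 p) (dot_comm y p).
by field.
Qed.

Section FastGradient.
Variables (n : nat) (X : vec n -> Prop) (f : vec n -> R) (g : vec n -> vec n)
  (L kappa fstar : R) (x y : nat -> vec n) (p : vec n).
Hypotheses (convX : convex_setn X) (convf : convex_fun_on X f)
  (grad_f : has_gradient_on X f g) (L_gt0 : 0 < L) (lip_g : lipschitz_on X g L)
  (f_ge : forall z, X z -> fstar <= f z)
  (kappa_gt0 : 0 < kappa) (qsc : quasi_strongly_convex X f g fstar kappa).

Lemma kappa_le_lipschitz z zb : X z -> is_proj (optset X f fstar) z zb ->
  0 < dot (vsub z zb) (vsub z zb) -> kappa <= L.
Proof.
move=> Xz Pz dist_gt0; have [[Xzb fzb] _] := Pz.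
have := qsc Xz Pz; have := descent_lemma convX convf grad_f L_gt0 lip_g Xz Xzb.
have -> : vsub zb z = vscale (-1) (vsub z zb) by vext; ring.
rewrite fzb vnorm_sq !dot_scalel !dot_scaler => desc q.
by apply: (Rmult_le_reg_r (dot (vsub z zb) (vsub z zb))) => //; lra.
Qed.

Hypotheses (x0E : x 0%nat = y 0%nat)
  (x_step : forall k, is_proj X (vsub (y k) (vscale (/ L) (g (y k)))) (x k.+1))
  (y_step : forall k, y k.+1 = vadd (x k.+1)
      (vscale ((sqrt L - sqrt kappa) / (sqrt L + sqrt kappa)) (vsub (x k.+1) (x k))))
  (Xy : forall k, X (y k)) (Py : forall k, is_proj (optset X f fstar) (y k) p).

Local Notation th := (sqrt (kappa / L)).
Local Notation lyap k :=
  (f (x k) - fstar + kappa / 2 * dot (vsub (fgm_v th (x k) (y k)) p) (vsub (fgm_v th (x k) (y k)) p)).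

Lemma fgm_x_in k : X (x k).
Proof. by case: k => [|k]; [rewrite x0E | case: (x_step k)]. Qed.

Lemma fgm_theta_gt0 : 0 < th.
Proof. exact/sqrt_lt_R0/Rdiv_lt_0_compat. Qed.

Lemma fgm_kappaE : kappa = th * th * L.
Proof. rewrite sqrt_sqrt; [field; lra | apply: Rlt_le; exact: Rdiv_lt_0_compat]. Qed.

Lemma fgm_theta_le1 : kappa <= L -> th <= 1.
Proof.
move=> kL; rewrite -sqrt_1; apply: sqrt_le_1_alt.
by apply: (Rmult_le_reg_r L) => //; rewrite Rmult_1_l /Rdiv Rmult_assoc Rinv_l; lra.
Qed.

Lemma fgm_momentumE : (sqrt L - sqrt kappa) / (sqrt L + sqrt kappa) = (1 - th) / (1 + th).
Proof.
have sL_gt0 := sqrt_lt_R0 _ L_gt0; have := fgm_theta_gt0.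
have -> : sqrt kappa = th * sqrt L.
  rewrite -sqrt_mult_alt; last by apply: Rlt_le; exact: Rdiv_lt_0_compat.
  by congr sqrt; field; lra.
by move=> ?; field; split; nra.
Qed.

Lemma fgm_lyap_contract : kappa <= L -> forall k, lyap k.+1 <= (1 - th) * lyap k.
Proof.
move=> kL k; have th1 := fgm_theta_le1 kL.
have th0 := fgm_theta_gt0; have [[Xp _] _] := Py k.
have step_x : f (x k.+1) <= f (x k) + L * dot (vsub (y k) (x k.+1)) (vsub (y k) (x k))
                             - L / 2 * dot (vsub (y k) (x k.+1)) (vsub (y k) (x k.+1)).
  have := gradient_step_le convX convf grad_f L_gt0 lip_g (Xy k) (x_step k) (fgm_x_in k).
  have := convex_gradient_ineq convX convf grad_f (Xy k) (fgm_x_in k); lra.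
have step_p : f (x k.+1) <= fstar - kappa / 2 * dot (vsub (y k) p) (vsub (y k) p)
                             + L * dot (vsub (y k) (x k.+1)) (vsub (y k) p)
                             - L / 2 * dot (vsub (y k) (x k.+1)) (vsub (y k) (x k.+1)).
  have := gradient_step_le convX convf grad_f L_gt0 lip_g (Xy k) (x_step k) Xp.
  have := qsc (Xy k) (Py k); rewrite vnorm_sq; lra.
have := fgm_lyapunov_identity (x k) (x k.+1) (y k) p L (f (x k)) (f (x k.+1)) fstar
  (Rgt_not_eq _ _ th0) ltac:(lra).
rewrite /= -fgm_kappaE -fgm_momentumE -y_step => lyapE.
have : 0 <= kappa / 2 * th * (1 - th) *
  dot (vsub (fgm_v th (x k) (y k)) (y k)) (vsub (fgm_v th (x k) (y k)) (y k)).
  by apply: Rmult_le_pos; [apply: Rmult_le_pos; [apply: Rmult_le_pos|]|apply: dot_ge0]; lra.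
nra.
Qed.

Lemma fgm_lyap_initial : lyap 0%nat <= 2 * (f (x 0%nat) - fstar).
Proof.
have -> : fgm_v th (x 0%nat) (y 0%nat) = x 0%nat.
  by have := fgm_theta_gt0; rewrite /fgm_v -x0E => ?; vext; field; lra.
have := quadratic_growth convX convf grad_f f_ge kappa_gt0 qsc (Xy 0) (Py 0).
by rewrite -x0E; lra.
Qed.

Lemma fgm_linear_rate_of_le : kappa <= L ->
  forall k, f (x k) - fstar <= (1 - th) ^ k * (2 * (f (x 0%nat) - fstar)).
Proof.
move=> kL k; have th1 : 0 <= 1 - th by have := fgm_theta_le1 kL; lra.
have lyap_le : lyap k <= (1 - th) ^ k * lyap 0%nat.
  elim: k => [|k IH] /=; first lra.
  apply: Rle_trans (fgm_lyap_contract kL k) _; rewrite Rmult_assoc.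
  exact: Rmult_le_compat_l.
apply: Rle_trans (Rmult_le_compat_l _ _ _ (pow_le _ k th1) fgm_lyap_initial).
have := dot_ge0 (vsub (fgm_v th (x k) (y k)) p); nra.
Qed.

Lemma fgm_optimal_of_y_eq : (forall k, y k = p) -> forall k, f (x k) = fstar.
Proof.
have [[Xp fp] _] := Py 0; move=> yE [|k]; first by rewrite x0E yE.
apply: Rle_antisym; last exact/f_ge/fgm_x_in.
have := gradient_step_le convX convf grad_f L_gt0 lip_g (Xy k) (x_step k) (Xy k).
have := dot_ge0 (vsub (y k) (x k.+1)).
rewrite yE fp !dot_subr; nra.
Qed.

Lemma fgm_linear_rate k : f (x k) - fstar <= (1 - th) ^ k * (2 * (f (x 0%nat) - fstar)).
Proof.
case: (Rle_lt_dec kappa L) => [kL|Lk]; first exact: fgm_linear_rate_of_le.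
have yE j : y j = p.
  apply: vsub_dot_eq0; case: (Rle_lt_or_eq_dec _ _ (dot_ge0 (vsub (y j) p))) => // dist_gt0.
  by have := kappa_le_lipschitz (Xy j) (Py j) dist_gt0; lra.
rewrite !fgm_optimal_of_y_eq //; lra.
Qed.

End FastGradient.

Theorem theorem14 (n : nat) (X : vec n -> Prop) (f : vec n -> R) (g : vec n -> vec n)
    (Lf kappa fstar : R) (x y : nat -> vec n) :
  (exists z, X z) -> closed_setn X -> convex_setn X ->
  convex_fun_on X f -> has_gradient_on X f g -> continuous_onn X g ->
  0 < Lf -> lipschitz_on X g Lf ->
  (forall z, X z -> fstar <= f z) ->
  (exists z, optset X f fstar z) -> closed_setn (optset X f fstar) ->
  0 < kappa -> quasi_strongly_convex X f g fstar kappa ->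
  x 0%nat = y 0%nat -> X (x 0%nat) ->
  (forall k, is_proj X (vsub (y k) (vscale (/ Lf) (g (y k)))) (x (S k))) ->
  (forall k, y (S k) = vadd (x (S k))
      (vscale ((sqrt Lf - sqrt kappa) / (sqrt Lf + sqrt kappa)) (vsub (x (S k)) (x k)))) ->
  (forall k, X (y k)) ->
  (exists p, forall k, is_proj (optset X f fstar) (y k) p) ->
  forall k, f (x k) - fstar <= (1 - sqrt (kappa / Lf)) ^ k * (2 * (f (x 0%nat) - fstar)).
Proof.
move=> _ _ convX convf grad_f _ L_gt0 lip_g f_ge _ _ kappa_gt0 qsc x0E _ x_step y_step Xy [p Py].
exact: (fgm_linear_rate convX convf grad_f L_gt0 lip_g f_ge kappa_gt0 qsc x0E x_step y_step Xy Py).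
Qed.
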